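(* Let $M=(M_{ij})$ be a reduced $n\times n$ matrix of integers with $M_{ij}>0$ for all $i,j$. If there exist $i\neq j$ with $M_{ii}=1$ and $M_{jj}=1$, then $\mathrm{Cat}(M)=\emptyset$.
   Context: For an $n\times n$ matrix $M=(m_{ij})$ with entries in the natural numbers, $\mathrm{Cat}(M)$ denotes the collection of categories $A$ with exactly $n$ distinct objects $x_1,\dots,x_n$ such that $|A(x_i,x_j)|=m_{ij}$ for all $i,j$, where $A(x_i,x_j)$ is the set of morphisms from $x_i$ to $x_j$. A matrix $M$ is called non-reduced if there exist $i\neq j$ such that $M_{ki}=M_{kj}$ and $M_{ik}=M_{jk}$ for all $k$ (row $i$ equals row $j$ and column $i$ equals column $j$); it is called reduced otherwise. *)

From mathcomp Require Import all_boot all_algebra.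

Set Implicit Arguments.
Unset Strict Implicit.
Unset Printing Implicit Defensive.

(* A (small) category whose objects are x_0,...,x_(n-1) (indexed by 'I_n,
   hence pairwise distinct) and whose hom-sets are finite.
   Composition is written in diagrammatic order: comp f g = g o f. *)
Record fincat (n : nat) := FinCat {
  hom : 'I_n -> 'I_n -> finType;
  idm : forall i, hom i i;
  comp : forall i j k, hom i j -> hom j k -> hom i k;
  comp_idl : forall i j (f : hom i j), comp (idm i) f = f;
  comp_idr : forall i j (f : hom i j), comp f (idm j) = f;
  comp_assoc : forall i j k l (f : hom i j) (g : hom j k) (h : hom k l),
      comp (comp f g) h = comp f (comp g h)
}.

Definition inCat (n : nat) (M : 'M[nat]_n) (A : fincat n) : Prop :=
  forall i j : 'I_n, #|hom A i j| = M i j.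

Definition non_reduced (n : nat) (M : 'M[nat]_n) : Prop :=
  exists i j : 'I_n, i != j /\
    (forall k, M k i = M k j) /\ (forall k, M i k = M j k).

Definition reduced (n : nat) (M : 'M[nat]_n) : Prop := ~ non_reduced M.

From Pilot Require (* Re-import so that [hom] and [comp] refer to [fincat], not to vector.v. *)
Import Defs.
From mathcomp Require Import all_boot all_algebra.
Import Defs.

(* If x_i and x_j each have only the identity as endomorphism, then any pair
   of morphisms f : x_i -> x_j and g : x_j -> x_i are mutually inverse.  Composing with an isomorphism
   gives bijections A(x_k, x_i) ~ A(x_k, x_j) and A(x_i, x_k) ~ A(x_j, x_k),
   so rows i, j and columns i, j of M coincide, contradicting reducedness. *)

Lemma card1_eq (T : finType) (x y : T) : #|T| = 1 -> x = y.
Proof.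
by move=> T1; apply/(fintype_le1P _); rewrite T1.
Qed.

Section Isomorphisms.

Variables (n : nat) (A : fincat n) (i j : 'I_n).
Variables (f : hom A i j) (g : hom A j i).
Hypotheses (fgK : comp f g = idm A i) (gfK : comp g f = idm A j).

Lemma card_hom_iso_cod k : #|hom A k i| = #|hom A k j|.
Proof.
apply: (@bij_eq_card _ _ (fun h : hom A k i => comp h f)).
exists (fun h : hom A k j => comp h g) => h /=.
  by rewrite comp_assoc fgK comp_idr.
by rewrite comp_assoc gfK comp_idr.
Qed.

Lemma card_hom_iso_dom k : #|hom A i k| = #|hom A j k|.
Proof.
apply: (@bij_eq_card _ _ (fun h : hom A i k => comp g h)).
exists (fun h : hom A j k => comp f h) => h /=.
  by rewrite -comp_assoc fgK comp_idl.
by rewrite -comp_assoc gfK comp_idl.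
Qed.

End Isomorphisms.

Lemma hom_witness {n} {M : 'M[nat]_n} {A : fincat n} {i j} :
  inCat M A -> 0 < M i j -> hom A i j.
Proof.
by move=> inA Mij; have /card_gt0P/sigW[h _] : 0 < #|hom A i j| by rewrite inA.
Qed.

Theorem mainTheorem8 (n : nat) (M : 'M[nat]_n) :
  reduced M ->
  (forall i j : 'I_n, 0 < M i j) ->
  (exists i j : 'I_n, i != j /\ M i i = 1 /\ M j j = 1) ->
  forall A : fincat n, ~ inCat M A.
Proof.
move=> red pos [i [j [nij [Mii Mjj]]]] A inA.
pose f := hom_witness inA (pos i j).
pose g := hom_witness inA (pos j i).
have fgK : comp f g = idm A i by apply: card1_eq; rewrite inA.
have gfK : comp g f = idm A j by apply: card1_eq; rewrite inA.
apply: red; exists i, j; split; [exact: nij | split=> k; rewrite -!inA].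
- exact: card_hom_iso_cod fgK gfK k.
- exact: card_hom_iso_dom fgK gfK k.
Qed.
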